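(* The game $G_{FL}=(\omega^{<\omega},c_{00}(\omega))$ has the following three properties, and any game $G=(T,A)$ with these three properties is isomorphic in $\mathbf{Games}_A$ to $G_{FL}$: (1) $T$ and $A$ are countable; (2) every finite game admits a game embedding into $G$; (3) $G$ is ultrahomogeneous with respect to $(\mathrm{emb},\mathbf{FinGame})$, i.e. for every finite game $C$ and all game embeddings $f,g\colon C\to G$ there is an automorphism $u$ of $G$ in $\mathbf{Games}_A$ with $u\circ f=g$.
   Context: A game tree is $T\subseteq M^{<\omega}$ (some set $M$) closed under initial segments such that every $t\in T$ has an extension $t^\frown x\in T$; $|t|$ is the length, $t\restriction k$ the initial segment of length $k$. $\mathrm{Run}(T)=\{R\in M^\omega:R\restriction n\in T\ \forall n\}$. A game is $(T,A)$ with $A\subseteq\mathrm{Run}(T)$; finite if $\mathrm{Run}(T)$ is finite. A chronological map $f\colon T_1\to T_2$ satisfies $|f(t)|=|t|$, $f(t\restriction k)=f(t)\restriction k$, inducing $\bar f$ on runs via $\bar f(R)\restriction n=f(R\restriction n)$. $\mathbf{Games}_A$ is the category of games with A-morphisms (chronological $f$ with $\bar f[A_1]\subseteq A_2$); its isomorphisms (automorphisms) are bijective chronological maps $f$ with $\bar f[A_1]=A_2$. A game embedding is an injective chronological $f$ with $\bar f(R)\in A_2\iff R\in A_1$ for all runs $R$. $c_{00}(\omega)$ is the set of eventually zero sequences in $\omega^\omega=\mathrm{Run}(\omega^{<\omega})$. *)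

From mathcomp Require Import all_boot.
Set Implicit Arguments. Unset Strict Implicit. Unset Printing Implicit Defensive.

(* Finite sequences over M are lists; subsets of M^{<omega} and of M^omega are predicates. *)

Definition prefix (M : Type) (R : nat -> M) (n : nat) : seq M := map R (iota 0 n).

Definition is_game_tree (M : Type) (T : seq M -> Prop) : Prop :=
  (forall t k, T t -> T (take k t)) /\ (forall t, T t -> exists x, T (rcons t x)).

Definition Run (M : Type) (T : seq M -> Prop) (R : nat -> M) : Prop :=
  forall n, T (prefix R n).

Definition is_game (M : Type) (T : seq M -> Prop) (A : (nat -> M) -> Prop) : Prop :=
  is_game_tree T /\ (forall R, A R -> Run T R).

Definition finite_game (M : Type) (T : seq M -> Prop) : Prop :=
  exists (n : nat) (e : nat -> (nat -> M)),
    forall R, Run T R -> exists i, i < n /\ R = e i.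

Definition countable_set (U : Type) (P : U -> Prop) : Prop :=
  exists g : U -> nat, forall x y, P x -> P y -> g x = g y -> x = y.

(* Chronological map T1 -> T2 (values outside T1 irrelevant). *)
Definition chronological (M1 M2 : Type) (T1 : seq M1 -> Prop) (T2 : seq M2 -> Prop)
  (f : seq M1 -> seq M2) : Prop :=
  forall t, T1 t ->
    T2 (f t) /\ size (f t) = size t /\ (forall k, f (take k t) = take k (f t)).

Definition runs_to (M1 M2 : Type) (f : seq M1 -> seq M2) (R : nat -> M1) (S : nat -> M2) :
  Prop := forall n, f (prefix R n) = prefix S n.

Definition injective_on (M1 M2 : Type) (T1 : seq M1 -> Prop) (f : seq M1 -> seq M2) : Prop :=
  forall s t, T1 s -> T1 t -> f s = f t -> s = t.

Definition game_embedding (M1 M2 : Type)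
  (T1 : seq M1 -> Prop) (A1 : (nat -> M1) -> Prop)
  (T2 : seq M2 -> Prop) (A2 : (nat -> M2) -> Prop) (f : seq M1 -> seq M2) : Prop :=
  chronological T1 T2 f /\ injective_on T1 f /\
  (forall R, Run T1 R -> forall S, runs_to f R S -> (A2 S <-> A1 R)).

Definition game_iso (M1 M2 : Type)
  (T1 : seq M1 -> Prop) (A1 : (nat -> M1) -> Prop)
  (T2 : seq M2 -> Prop) (A2 : (nat -> M2) -> Prop) (f : seq M1 -> seq M2) : Prop :=
  chronological T1 T2 f /\ injective_on T1 f /\
  (forall t2, T2 t2 -> exists t1, T1 t1 /\ f t1 = t2) /\
  (forall R, A1 R -> forall S, runs_to f R S -> A2 S) /\
  (forall S, A2 S -> exists R, A1 R /\ runs_to f R S).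

Definition prop_countable (M : Type) (T : seq M -> Prop) (A : (nat -> M) -> Prop) : Prop :=
  countable_set T /\ countable_set A.

Definition prop_universal (M : Type) (T : seq M -> Prop) (A : (nat -> M) -> Prop) : Prop :=
  forall (M' : Type) (TC : seq M' -> Prop) (AC : (nat -> M') -> Prop),
    is_game TC AC -> finite_game TC ->
    exists f : seq M' -> seq M, game_embedding TC AC T A f.

Definition prop_ultrahomogeneous (M : Type) (T : seq M -> Prop) (A : (nat -> M) -> Prop)
  : Prop :=
  forall (M' : Type) (TC : seq M' -> Prop) (AC : (nat -> M') -> Prop),
    is_game TC AC -> finite_game TC ->
    forall f g : seq M' -> seq M,
      game_embedding TC AC T A f -> game_embedding TC AC T A g ->
      exists u : seq M -> seq M, game_iso T A T A u /\ (forall t, TC t -> u (f t) = g t).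

Definition T_FL : seq nat -> Prop := fun _ => True.
Definition c00 : (nat -> nat) -> Prop := fun R => exists N, forall n, N <= n -> R n = 0.

(* Maps between trees are built level by level, relabelling the children of each node by a
   function of the node; such a map is an isomorphism as soon as every relabelling is a
   bijection and won runs correspond.
   A finite game C embeds into G_FL: label a move 0 or 1 (won or lost) when the least run of C
   through the node is unchanged and i + 2 when it becomes the i-th run; along a run the least
   run stabilises on the run itself, so the labels are eventually 0 exactly on won runs.  Two
   embeddings f, g of C differ at each node by a finite injection of children, which extends to
   a permutation of nat; these permutations give an automorphism u with u o f = g, and u
   eventually fixes every run that leaves the image of f, so it preserves c00.
   Conversely, applying universality and ultrahomogeneity to combs (games with one branching
   node with m + 1 children) shows that in G every node lies on a won run and has infinitely many
   children.  Labelling 0 the move along the won run of least code through the current node and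
   1, 2, ... the other children in increasing order of code is then a level-wise bijection onto
   nat^{<omega} under which the won runs are those eventually labelled 0. *)

From Pilot Require Import Defs.
From mathcomp Require Import all_boot boolp.
(* Re-imported so that [prefix] denotes [Defs.prefix], not [seq.prefix]. *)
Import Defs.
Set Implicit Arguments. Unset Strict Implicit. Unset Printing Implicit Defensive.

Section Runs.
Variable M : Type.
Implicit Types (R : nat -> M) (t : seq M).

Lemma size_prefix R n : size (prefix R n) = n.
Proof. exact: size_mkseq. Qed.

Lemma nth_prefix R x n i : i < n -> nth x (prefix R n) i = R i.
Proof. exact: nth_mkseq. Qed.

Lemma prefixS R n : prefix R n.+1 = rcons (prefix R n) (R n).
Proof. exact: mkseqS. Qed.

Lemma take_prefix R m n : take m (prefix R n) = prefix R (minn m n).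
Proof. by rewrite /prefix -map_take take_iota. Qed.

Lemma take_prefix_le R m n : m <= n -> take m (prefix R n) = prefix R m.
Proof. by move=> le_mn; rewrite take_prefix (minn_idPl le_mn). Qed.

Lemma run_ext R R' N : (forall n, N <= n -> prefix R n = prefix R' n) -> R = R'.
Proof.
move=> eqRR'; apply: funext => m.
have ltm : m < maxn N m.+1 by rewrite leq_max ltnSn orbT.
by rewrite -(nth_prefix R (R m) ltm) eqRR' ?leq_maxl // nth_prefix.
Qed.

Lemma run_of_coherent (s : nat -> seq M) :
  (forall n, size (s n) = n) -> (forall m n, m <= n -> take m (s n) = s m) ->
  exists R, forall n, prefix R n = s n.
Proof.
move=> size_s take_s; case E: (s 1) => [|x0 ?]; first by move: (size_s 1); rewrite E.
exists (fun i => nth x0 (s i.+1) i) => n.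
rewrite /prefix -[RHS](mkseq_nth x0) size_s; apply/eq_in_map => i.
by rewrite mem_iota add0n => /andP[_ lt_in]; rewrite -(take_s i.+1 n lt_in) nth_take.
Qed.

Lemma rcons_take_nth x0 t k : size t = k.+1 -> rcons (take k t) (nth x0 t k) = t.
Proof. by move=> size_t; rewrite -take_nth ?size_t // take_oversize ?size_t. Qed.

Variable T : seq M -> Prop.

Lemma game_tree_rcons t x : is_game_tree T -> T (rcons t x) -> T t.
Proof. by case=> take_T _ /(take_T _ (size t)); rewrite -cats1 take_size_cat. Qed.

Lemma game_tree_nil t : is_game_tree T -> T t -> T [::].
Proof. by case=> take_T _ /(take_T _ 0); rewrite take0. Qed.

Lemma run_through t : is_game_tree T -> T t -> exists R, Run T R /\ prefix R (size t) = t.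
Proof.
move=> [take_T ext_T] Tt.
have [x _] := ext_T t Tt.
have [next next_ok] : {next : seq M -> M & forall s, T s -> T (rcons s (next s))}.
  apply: (choice (P := fun s y => T s -> T (rcons s y))) => s.
  by have [/ext_T [y ?]|] := pselect (T s); [exists y | exists x].
pose s n := iter n (fun s => rcons s (next s)) t.
have Ts n : T (s n) by elim: n => //= n IH; apply: next_ok.
have size_s n : size (s n) = size t + n.
  by elim: n => [|n IH] /=; rewrite ?addn0 // size_rcons IH addnS.
have take_s m n : m <= n -> take (size (s m)) (s n) = s m.
  move/subnK <-; elim: (n - m) => [|k IH]; first by rewrite take_size.
  by rewrite addSn /= -cats1 takel_cat ?IH // !size_s leq_add2l leq_addl.
have [R PR] : exists R, forall n, prefix R n = take n (s n).
  apply: run_of_coherent => [n|m n le_mn]; first by rewrite size_takel // size_s leq_addl.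
  by rewrite take_takel // -(take_s m n le_mn) take_takel // size_s leq_addl.
exists R; split => [n|]; first by rewrite PR; apply: take_T.
by rewrite PR; have /= := take_s 0 (size t) (leq0n _).
Qed.
End Runs.

Section Chronological.
Variables (M1 M2 : Type) (T1 : seq M1 -> Prop) (T2 : seq M2 -> Prop) (f : seq M1 -> seq M2).
Hypothesis f_chrono : chronological T1 T2 f.

Lemma chronological_size t : T1 t -> size (f t) = size t.
Proof. by case/f_chrono=> _ []. Qed.

Lemma chronological_take t k : T1 t -> f (take k t) = take k (f t).
Proof. by case/f_chrono=> _ [_ ->]. Qed.

Lemma chronological_run R : Run T1 R -> exists S, runs_to f R S /\ Run T2 S.
Proof.
move=> RunR; have [S PS] : exists S, forall n, prefix S n = f (prefix R n).
  apply: run_of_coherent => [n|m n le_mn]; first by rewrite chronological_size ?size_prefix.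
  by rewrite -chronological_take // take_prefix_le.
by exists S; split=> n; rewrite PS //; case: (f_chrono (RunR n)).
Qed.

Lemma chronological_rcons x0 t x : T1 (rcons t x) ->
  f (rcons t x) = rcons (f t) (nth x0 (f (rcons t x)) (size t)).
Proof.
move=> Ttx; rewrite -[in f t](take_size_cat [:: x] (erefl (size t))) cats1.
by rewrite chronological_take // rcons_take_nth // chronological_size // size_rcons.
Qed.

Lemma chronological_run_preimage R : is_game_tree T1 -> injective_on T1 f ->
  (forall m, exists t, T1 t /\ f t = prefix R m) -> exists R', Run T1 R' /\ runs_to f R' R.
Proof.
move=> treeT f_inj /(choice (P := fun m t => T1 t /\ f t = prefix R m)) [s sP].
have [R' PR'] : exists R', forall m, prefix R' m = s m.
  apply: run_of_coherent => [m|k m le_km].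
    by case: (sP m) => Ts fs; rewrite -(chronological_size Ts) fs size_prefix.
  have [Tsm fsm] := sP m; have [Tsk fsk] := sP k.
  apply: f_inj; [exact: treeT.1 | by [] | by rewrite chronological_take // fsm fsk take_prefix_le].
by exists R'; split=> m; rewrite PR'; case: (sP m).
Qed.
End Chronological.

Section Relabel.
Variables (M N : Type) (lab : seq M -> M -> N).

Fixpoint relabel_after (h t : seq M) : seq N :=
  if t is x :: t' then lab h x :: relabel_after (rcons h x) t' else [::].
Definition relabel t := relabel_after [::] t.

Lemma relabel_after_rcons h t x :
  relabel_after h (rcons t x) = rcons (relabel_after h t) (lab (h ++ t) x).
Proof. by elim: t h => [|y t IH] h /=; rewrite ?cats0 // IH cat_rcons. Qed.

Lemma relabel_rcons t x : relabel (rcons t x) = rcons (relabel t) (lab t x).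
Proof. exact: relabel_after_rcons. Qed.

Lemma size_relabel t : size (relabel t) = size t.
Proof. by rewrite /relabel; elim: t [::] => //= x t IH h; rewrite IH. Qed.

Lemma relabel_take k t : relabel (take k t) = take k (relabel t).
Proof. by rewrite /relabel; elim: t [::] k => [|x t IH] h [|k] //=; rewrite IH. Qed.

Lemma relabel_chronological (T : seq M -> Prop) : chronological T (fun _ => True) relabel.
Proof. by move=> t _; split=> //; split=> [|k]; rewrite ?size_relabel ?relabel_take. Qed.

Lemma runs_relabel R S : runs_to relabel R S -> forall n, S n = lab (prefix R n) (R n).
Proof. by move=> RS n; have := RS n.+1; rewrite !prefixS relabel_rcons RS => /rcons_inj[]. Qed.

Lemma relabel_inj_on (T : seq M -> Prop) : is_game_tree T ->
  (forall t x y, T (rcons t x) -> T (rcons t y) -> lab t x = lab t y -> x = y) ->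
  injective_on T relabel.
Proof.
move=> treeT lab_inj s; elim/last_ind: s => [|s x IH] t.
  by case/lastP: t => // t y _ _ /(congr1 size); rewrite relabel_rcons size_rcons.
case/lastP: t => [|t y] Ts Tt; rewrite !relabel_rcons.
  by move/(congr1 size); rewrite size_rcons.
have Ts' := game_tree_rcons treeT Ts; have Tt' := game_tree_rcons treeT Tt.
case/rcons_inj=> /(IH t Ts' Tt') eq_st; subst t.
by move/(lab_inj _ _ _ Ts Tt)->.
Qed.

Variable unlab : seq M -> N -> M.
Definition unrelabel (s : seq N) : seq M := foldl (fun h y => rcons h (unlab h y)) [::] s.

Lemma unrelabel_rcons s y : unrelabel (rcons s y) = rcons (unrelabel s) (unlab (unrelabel s) y).
Proof. exact: foldl_rcons. Qed.

Lemma size_unrelabel s : size (unrelabel s) = size s.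
Proof. by elim/last_ind: s => // s y IH; rewrite unrelabel_rcons !size_rcons IH. Qed.

Lemma unrelabel_take k s : unrelabel (take k s) = take k (unrelabel s).
Proof.
elim/last_ind: s k => [|s y IH] k; first by case: k.
rewrite unrelabel_rcons -!cats1 !take_cat size_unrelabel; case: ifP => _; first exact: IH.
by case: (k - size s) => [|j] /=; rewrite ?cats0 // cats1 unrelabel_rcons cats1.
Qed.

Lemma relabelK (T : seq M -> Prop) : T [::] ->
  (forall t y, T t -> T (rcons t (unlab t y)) /\ lab t (unlab t y) = y) ->
  forall s, T (unrelabel s) /\ relabel (unrelabel s) = s.
Proof.
move=> T0 unlabP; elim/last_ind => [|s y [Ts eq_s]] //.
by rewrite unrelabel_rcons relabel_rcons eq_s; have [? ->] := unlabP _ y Ts.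
Qed.
End Relabel.

Lemma relabel_game_iso M N (T : seq M -> Prop) (A : (nat -> M) -> Prop) (A' : (nat -> N) -> Prop)
    (lab : seq M -> M -> N) :
  is_game T A -> T [::] ->
  (forall t x y, T (rcons t x) -> T (rcons t y) -> lab t x = lab t y -> x = y) ->
  (forall t z, T t -> exists x, T (rcons t x) /\ lab t x = z) ->
  (forall R S, Run T R -> runs_to (relabel lab) R S -> A R <-> A' S) ->
  game_iso T A (fun _ => True) A' (relabel lab).
Proof.
move=> [treeT A_run] T0 lab_inj lab_onto runsA; have [x0 _] := treeT.2 _ T0.
pose P (tz : seq M * N) x := T tz.1 -> T (rcons tz.1 x) /\ lab tz.1 x = tz.2.
have [pick pickP] : {pick : seq M * N -> M & forall tz, P tz (pick tz)}.
  apply: (choice (P := P)) => [[t z]]; rewrite /P /=.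
  by have [/(lab_onto t z) [x ?]|] := pselect (T t); [exists x | exists x0].
pose unlab t z := pick (t, z).
have unlabP t z : T t -> T (rcons t (unlab t z)) /\ lab t (unlab t z) = z := pickP (t, z).
have unrelabelK := relabelK T0 unlabP.
split; [exact: relabel_chronological | split; [exact: relabel_inj_on | split]].
  by move=> s _; exists (unrelabel unlab s); apply: unrelabelK.
split=> [R AR S RS|S A'S]; first by apply/(runsA R S (A_run R AR) RS).
have [R PR] : exists R, forall n, prefix R n = unrelabel unlab (prefix S n).
  apply: run_of_coherent => [n|m n le_mn]; first by rewrite size_unrelabel size_prefix.
  by rewrite -unrelabel_take take_prefix_le.
have RunR : Run T R by move=> n; rewrite PR; case: (unrelabelK (prefix S n)).
have RS : runs_to (relabel lab) R S by move=> n; rewrite PR; case: (unrelabelK (prefix S n)).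
by exists R; split=> //; apply/(runsA R S RunR RS).
Qed.

Section LeastIndexedRun.
Variables (M : Type) (W : nat -> (nat -> M) -> Prop) (default_run : nat -> M).
Hypothesis W_fun : forall i R R', W i R -> W i R' -> R = R'.
Implicit Types (R : nat -> M) (t : seq M).

Definition through t i := exists R, W i R /\ prefix R (size t) = t.

Definition least_index t : nat :=
  if pselect (exists i, `[< through t i >]) is left ex then ex_minn ex else 0.

Lemma least_indexP t : (exists i, through t i) ->
  through t (least_index t) /\ forall i, through t i -> least_index t <= i.
Proof.
case=> i ti; rewrite /least_index; case: pselect => [ex|[]]; last by exists i; apply/asboolP.
by case: ex_minnP => m /asboolP tm m_min; split=> // k /asboolP/m_min.
Qed.

Lemma through_rcons_inj t x y i : through (rcons t x) i -> through (rcons t y) i -> x = y.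
Proof.
move=> [R [WR Rx]] [R' [WR' Ry]]; rewrite (W_fun WR WR') !size_rcons in Rx.
by rewrite size_rcons Rx in Ry; case/rcons_inj: Ry.
Qed.

Definition least_run t : nat -> M :=
  if pselect (through t (least_index t)) is left ex then proj1_sig (cid ex) else default_run.

Lemma least_runP t : (exists i, through t i) ->
  W (least_index t) (least_run t) /\ prefix (least_run t) (size t) = t.
Proof.
move/least_indexP=> [ex _]; rewrite /least_run; case: pselect => // ex'.
exact: proj2_sig (cid ex').
Qed.

Lemma through_prefix R j n : W j R -> through (prefix R n) j.
Proof. by exists R; rewrite size_prefix. Qed.

Lemma least_index_prefix_le R j n : W j R -> least_index (prefix R n) <= j.
Proof. by move=> /(through_prefix n) tj; apply: (least_indexP (ex_intro _ _ tj)).2. Qed.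

Lemma least_index_mono R m n : (exists i, through (prefix R n) i) -> m <= n ->
  least_index (prefix R m) <= least_index (prefix R n).
Proof.
move=> /least_indexP [[R' [WR' R'n]] _] le_mn.
have tm : through (prefix R m) (least_index (prefix R n)).
  exists R'; split=> //; rewrite size_prefix in R'n; rewrite size_prefix.
  by rewrite -(take_prefix_le R' le_mn) R'n take_prefix_le.
exact: (least_indexP (ex_intro _ _ tm)).2.
Qed.

Lemma least_index_eventually R j : W j R ->
  exists i N, W i R /\ forall n, N <= n -> least_index (prefix R n) = i.
Proof.
move=> WR; pose attained c := `[< exists n, least_index (prefix R n) = c >].
have ex_att : exists c, attained c by exists (least_index (prefix R 0)); apply/asboolP; exists 0.
have att_le c : attained c -> c <= j by move/asboolP=> [n <-]; apply: least_index_prefix_le WR.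
case: (ex_maxnP ex_att att_le) => c /asboolP [N Nc] c_max.
have stable n : N <= n -> least_index (prefix R n) = c.
  move=> le_Nn; apply/eqP; rewrite eqn_leq c_max /=; last by apply/asboolP; exists n.
  by rewrite -Nc; apply: least_index_mono le_Nn; exists j; apply: through_prefix.
have [[Rc [WRc RcN]] _] := least_indexP (ex_intro _ j (through_prefix N WR)).
rewrite Nc in WRc; exists c, N; split=> //; rewrite (_ : R = Rc) //.
apply: (run_ext (N := N)) => n le_Nn.
have [[Rn [WRn Rnn]] _] := least_indexP (ex_intro _ j (through_prefix n WR)).
by rewrite stable // in WRn; rewrite -(W_fun WRn WRc) -{1}Rnn size_prefix.
Qed.

Lemma least_run_eventually R j : W j R -> exists N, forall n, N <= n -> least_run (prefix R n) = R.
Proof.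
move=> /least_index_eventually [i [N [WR stable]]]; exists N => n le_Nn.
have [+ _] := least_runP (ex_intro _ i (through_prefix n WR)).
by rewrite stable // => /W_fun; apply.
Qed.

Lemma least_run_follower R N : (forall n, exists i, through (prefix R n) i) ->
  (forall n, N <= n -> R n = least_run (prefix R n) n) -> exists i, W i R.
Proof.
move=> ex_through follows; pose R' := least_run (prefix R N).
have [WR' R'N] := least_runP (ex_through N); rewrite size_prefix in R'N.
have agree k : prefix R' (N + k) = prefix R (N + k).
  elim: k => [|k IH]; first by rewrite addn0.
  have tk : through (prefix R (N + k)) (least_index (prefix R N)) by exists R'; rewrite size_prefix.
  have idx_k : least_index (prefix R (N + k)) = least_index (prefix R N).
    apply/eqP; rewrite eqn_leq (least_indexP (ex_through _)).2 //=.
    exact: least_index_mono (ex_through _) (leq_addr _ _).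
  have [WRk _] := least_runP (ex_through (N + k)); rewrite idx_k in WRk.
  by rewrite addnS !prefixS IH (follows _ (leq_addr _ _)) (W_fun WRk WR').
have <- : R' = R by apply: (run_ext (N := N)) => n /subnKC <-.
by exists (least_index (prefix R N)).
Qed.
End LeastIndexedRun.

Lemma game_FL : is_game T_FL c00.
Proof. by split=> //; split=> // t _; exists 0. Qed.

Lemma countable_FL : prop_countable T_FL c00.
Proof.
split; first by exists pickle => s t _ _; apply: (pcan_inj pickleK).
pose code R := if pselect (c00 R) is left ex then pickle (prefix R (proj1_sig (cid ex))) else 0.
exists code => R R' c00R c00R'; rewrite /code.
case: pselect => // ex; case: pselect => // ex'.
case: (cid ex) => N /= RN; case: (cid ex') => N' /= R'N' /(pcan_inj pickleK) eqRR'.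
have eqNN' : N = N' by rewrite -(size_prefix R N) eqRR' size_prefix.
subst N'; apply: funext => j; case: (ltnP j N) => [ltjN|leNj]; last by rewrite RN ?R'N'.
by rewrite -(nth_prefix R 0 ltjN) eqRR' nth_prefix.
Qed.

Section UniversalFL.
Variables (M : Type) (TC : seq M -> Prop) (AC : (nat -> M) -> Prop).
Variables (n : nat) (e : nat -> nat -> M).
Hypothesis treeC : is_game_tree TC.
Hypothesis e_onto : forall R, Run TC R -> exists i, i < n /\ R = e i.

Let W i R := i < n /\ R = e i /\ Run TC R.

Let W_fun i R R' : W i R -> W i R' -> R = R'.
Proof. by move=> [_ [-> _]] [_ [-> _]]. Qed.

Let through_node t : TC t -> exists i, through W t i.
Proof.
move=> /(run_through treeC) [R [RunR Rt]]; have [i [ltin eRi]] := e_onto RunR.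
by exists i, R.
Qed.

Definition universal_label (p : seq M) (x : M) : nat :=
  let i := least_index W (rcons p x) in
  if i == least_index W p then (if `[< AC (e i) >] then 0 else 1) else i.+2.

Lemma universal_label_inj p x y : TC (rcons p x) -> TC (rcons p y) ->
  universal_label p x = universal_label p y -> x = y.
Proof.
move=> /through_node /least_indexP [tx _] /through_node /least_indexP [ty _].
have same_index : least_index W (rcons p x) = least_index W (rcons p y) -> x = y.
  by move=> eq_xy; rewrite eq_xy in tx; exact: (through_rcons_inj W_fun tx ty).
rewrite /universal_label; case: eqP => [kx|_]; case: eqP => [ky|_]; try by case: asboolP.
  by move=> _; apply: same_index; rewrite kx ky.
by case=> /same_index.
Qed.

Lemma universal_label_eventually R : Run TC R ->
  exists N, forall m, N <= m -> universal_label (prefix R m) (R m) = if `[< AC R >] then 0 else 1.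
Proof.
move=> /[dup] RunR /e_onto [j [ltjn eRj]].
have [i [N [[_ [eRi _]] stable]]] := least_index_eventually W_fun (conj ltjn (conj eRj RunR)).
exists N => m le_Nm; rewrite /universal_label -prefixS !stable ?(leqW le_Nm) //.
by rewrite eqxx -eRi.
Qed.
End UniversalFL.

Lemma universal_FL : prop_universal T_FL c00.
Proof.
move=> M TC AC [treeC _] [n [e e_onto]].
exists (relabel (universal_label TC AC n e)); split; first exact: relabel_chronological.
split; first by apply: (relabel_inj_on treeC) => p x y; apply: (universal_label_inj treeC e_onto).
move=> R RunR S RS; have [N constant] := universal_label_eventually AC e_onto RunR.
have S_tail m : N <= m -> S m = if `[< AC R >] then 0 else 1.
  by move=> le_Nm; rewrite (runs_relabel RS) constant.
split=> [[N' S0]|ACR]; last by exists N => m /S_tail ->; case: asboolP.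
have := S_tail (maxn N N') (leq_maxl _ _); rewrite S0 ?leq_maxr //.
by case: asboolP.
Qed.

Definition swapn (a b z : nat) : nat := if z == a then b else if z == b then a else z.

Lemma swapnK a b : involutive (swapn a b).
Proof.
move=> z; rewrite /swapn; case: (eqVneq z a) => [->|neq_za]; first by rewrite eqxx; case: eqP.
by case: (eqVneq z b) => [->|neq_zb]; rewrite ?eqxx // (negbTE neq_za) (negbTE neq_zb).
Qed.

Lemma inj_in_extend_bij (F : seq nat) (h : nat -> nat) : {in F &, injective h} ->
  exists sg, bijective sg /\ {in F, sg =1 h}.
Proof.
elim: F => [|a F IH] h_inj; first by exists id; split=> //; exists id.
have [|sg [[tau sgK tauK] sgF]] := IH.
  by move=> x y Fx Fy; apply: h_inj; rewrite inE ?Fx ?Fy orbT.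
have [Fa|notFa] := boolP (a \in F).
  by exists sg; split; [exists tau | move=> x; rewrite inE => /predU1P [->|]; apply: sgF].
exists (swapn (h a) (sg a) \o sg); split.
  by exists (tau \o swapn (h a) (sg a)) => z /=; rewrite ?swapnK ?sgK // tauK swapnK.
move=> x; rewrite inE => /predU1P [->|Fx] /=.
  by rewrite /swapn; case: eqP => [->|]; rewrite ?eqxx.
have neq_xa : x != a by apply: contraNneq notFa => <-.
have neq_h : h x != h a by apply: contra_neq neq_xa; apply: h_inj; rewrite inE ?Fx ?eqxx ?orbT.
have neq_sg : h x != sg a by apply: contra_neq neq_xa => eq_xa; rewrite -(sgK x) sgF // eq_xa sgK.
by rewrite (sgF x Fx) /swapn (negbTE neq_h) (negbTE neq_sg).
Qed.

Section UltrahomogeneousFL.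
Variables (M : Type) (TC : seq M -> Prop) (AC : (nat -> M) -> Prop) (n : nat) (e : nat -> nat -> M).
Variables f g : seq M -> seq nat.
Hypothesis treeC : is_game_tree TC.
Hypothesis e_onto : forall R, Run TC R -> exists i, i < n /\ R = e i.
Hypotheses (f_chrono : chronological TC T_FL f) (g_chrono : chronological TC T_FL g).
Hypotheses (f_inj : injective_on TC f) (g_inj : injective_on TC g).
Hypothesis f_runs : forall R, Run TC R -> forall S, runs_to f R S -> (c00 S <-> AC R).
Hypothesis g_runs : forall R, Run TC R -> forall S, runs_to g R S -> (c00 S <-> AC R).

Definition f_image s := exists t, TC t /\ f t = s.
Definition f_child s y := exists c, TC c /\ f c = rcons s y.

Definition g_move s y : nat :=
  if pselect (f_child s y) is left ex then nth 0 (g (proj1_sig (cid ex))) (size s) else y.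

Lemma g_moveE s y c : TC c -> f c = rcons s y -> g_move s y = nth 0 (g c) (size s).
Proof.
move=> Tc fc; rewrite /g_move; case: pselect => [ex|[]]; last by exists c.
by case: (cid ex) => c' [Tc' fc'] /=; rewrite (f_inj Tc' Tc) // fc fc'.
Qed.

Lemma f_child_parent s y c : TC c -> f c = rcons s y ->
  exists p x, c = rcons p x /\ TC p /\ f p = s.
Proof.
case/lastP: c => [|p x] Tc fc.
  by move: (chronological_size f_chrono Tc); rewrite fc size_rcons.
exists p, x; split=> //; split; first exact: game_tree_rcons treeC Tc.
by move: fc; rewrite (chronological_rcons f_chrono 0 Tc) => /rcons_inj [].
Qed.

Definition f_children s : seq nat :=
  [seq y <- [seq nth 0 (f (prefix (e i) (size s).+1)) (size s) | i <- iota 0 n]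
     | `[< f_child s y >]].

Lemma f_childrenP s y : f_child s y -> y \in f_children s.
Proof.
move=> /[dup] fy [c [Tc fc]]; rewrite mem_filter (asboolT fy) /=.
have [R [RunR Rc]] := run_through treeC Tc; have [i [ltin eRi]] := e_onto RunR.
have size_c : size c = (size s).+1 by rewrite -(chronological_size f_chrono Tc) fc size_rcons.
apply/mapP; exists i; first by rewrite mem_iota.
by rewrite -size_c -eRi Rc fc nth_rcons ltnn eqxx.
Qed.

Lemma g_move_inj s : {in f_children s &, injective (g_move s)}.
Proof.
move=> y y'; rewrite !mem_filter.
move=> /andP [/asboolP [c [Tc fc]] _] /andP [/asboolP [c' [Tc' fc']] _].
rewrite (g_moveE Tc fc) (g_moveE Tc' fc') => eq_moves.
have [p [x [def_c [Tp fp]]]] := f_child_parent Tc fc.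
have [p' [x' [def_c' [Tp' fp']]]] := f_child_parent Tc' fc'.
have eq_p : p = p' by apply: f_inj; rewrite ?fp ?fp'.
have eq_c : c = c'.
  apply: g_inj => //; rewrite def_c def_c' -eq_p in Tc Tc' eq_moves *.
  rewrite (chronological_rcons g_chrono 0 Tc) (chronological_rcons g_chrono 0 Tc').
  by move: eq_moves; rewrite -fp (chronological_size f_chrono Tp) => ->.
by move: fc'; rewrite -eq_c fc => /rcons_inj [].
Qed.

Definition transfer_extension s := cid (inj_in_extend_bij (@g_move_inj s)).

(* Off the image of [f] nothing is moved, so runs leaving that image are eventually fixed. *)
Definition transfer s : nat -> nat :=
  if pselect (f_image s) is left _ then proj1_sig (transfer_extension s) else id.

Lemma transfer_bij s : bijective (transfer s).
Proof.
by rewrite /transfer; case: pselect => _; [case: (transfer_extension s) => ? [] | exists id].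
Qed.

Lemma transferE s y : f_child s y -> transfer s y = g_move s y.
Proof.
move=> fy; rewrite /transfer; case: pselect => [_|[]].
  by case: (transfer_extension s) => sg [_ /= ->] //; apply: f_childrenP.
by case: fy => c [Tc fc]; have [p [x [_ [Tp fp]]]] := f_child_parent Tc fc; exists p.
Qed.

Lemma transfer_off_image s : ~ f_image s -> transfer s = id.
Proof. by rewrite /transfer; case: pselect. Qed.

Lemma transfer_f t : TC t -> relabel transfer (f t) = g t.
Proof.
elim/last_ind: t => [|t x IH] Ttx.
  rewrite (size0nil (chronological_size f_chrono Ttx)).
  by rewrite (size0nil (chronological_size g_chrono Ttx)).
have Tt := game_tree_rcons treeC Ttx; have f_tx := chronological_rcons f_chrono 0 Ttx.
rewrite f_tx (chronological_rcons g_chrono 0 Ttx) relabel_rcons IH // transferE.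
  by rewrite (g_moveE Ttx f_tx) (chronological_size f_chrono Tt).
by exists (rcons t x).
Qed.

Lemma transfer_runs R S : runs_to (relabel transfer) R S -> (c00 R <-> c00 S).
Proof.
move=> RS; have [on_image|] := pselect (forall m, f_image (prefix R m)).
  have [R' [RunR' fR']] := chronological_run_preimage f_chrono treeC f_inj on_image.
  have gR' : runs_to g R' S by move=> m; rewrite -RS -fR' transfer_f.
  by rewrite (f_runs RunR' fR') (g_runs RunR' gR').
move=> /existsNP [m0 off_m0].
have tail m : m0 <= m -> S m = R m.
  move=> le_m0m; rewrite (runs_relabel RS) transfer_off_image // => [[t [Tt ft]]]; apply: off_m0.
  exists (take m0 t); split; first exact: treeC.1.
  by rewrite (chronological_take f_chrono) // ft take_prefix_le.
split=> [] [N zero]; exists (maxn N m0) => m; rewrite geq_max => /andP [le_Nm le_m0m].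
  by rewrite tail ?zero.
by rewrite -tail ?zero.
Qed.
End UltrahomogeneousFL.

Lemma ultrahomogeneous_FL : prop_ultrahomogeneous T_FL c00.
Proof.
move=> M TC AC [treeC _] [n [e e_onto]] f g [f_chrono [f_inj f_runs]] [g_chrono [g_inj g_runs]].
have bij := transfer_bij n e treeC f_chrono g_chrono f_inj g_inj.
exists (relabel (transfer n e treeC f_chrono g_chrono f_inj g_inj)).
split; last by move=> t; apply: transfer_f.
apply: relabel_game_iso game_FL _ _ _ _ => // [s x y _ _|s z _|R S _ RS].
- by have [tau sgK _] := bij s; apply: (can_inj sgK).
- by have [tau _ tauK] := bij s; exists (tau z).
- exact: (transfer_runs (treeC := treeC) e_onto f_runs g_runs RS).
Qed.

(* The comb C(k, m, ac): all moves are 0 except the k-th, which ranges over 0..m, so its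
   runs are the [comb_run k i] with [i <= m]; such a run is won iff [ac i]. *)
Definition comb_tree (k m : nat) (s : seq nat) : Prop := forall j, nth 0 s j <= (j == k) * m.
Definition comb_win (k m : nat) (ac : nat -> Prop) (R : nat -> nat) : Prop :=
  Run (comb_tree k m) R /\ ac (R k).
Definition comb_run (k i : nat) : nat -> nat := fun j => if j == k then i else 0.

Lemma Run_comb k m R : Run (comb_tree k m) R <-> forall j, R j <= (j == k) * m.
Proof.
split=> [RunR j|bounded n j]; first by have := RunR j.+1 j; rewrite nth_prefix.
by case: (ltnP j n) => [ltjn|lenj]; [rewrite nth_prefix | rewrite nth_default ?size_prefix].
Qed.

Lemma comb_game k m ac : is_game (comb_tree k m) (comb_win k m ac).
Proof.
split=> [|R []//]; split=> [t i Tt j|t Tt]; last first.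
  by exists 0 => j; rewrite nth_rcons; case: ltnP => _; [apply: Tt | case: eqP].
case: (ltnP j i) => [ltji|leij]; first by rewrite nth_take.
by rewrite nth_default // (leq_trans _ leij) // size_take_min geq_minl.
Qed.

Lemma comb_finite k m : finite_game (comb_tree k m).
Proof.
exists m.+1, (comb_run k) => R /Run_comb bounded; exists (R k); split.
  by have := bounded k; rewrite eqxx mul1n.
apply: funext => j; rewrite /comb_run; case: eqP => [->//|/eqP neq_jk].
by apply/eqP; rewrite -leqn0; have := bounded j; rewrite (negbTE neq_jk).
Qed.

Lemma Run_comb_run k m i : i <= m -> Run (comb_tree k m) (comb_run k i).
Proof. by move=> le_im; apply/Run_comb => j; rewrite /comb_run; case: eqP; rewrite ?mul1n. Qed.

Lemma comb_tree_nseq k m j : comb_tree k m (nseq j 0).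
Proof. by move=> i; rewrite nth_nseq; case: ifP. Qed.

Lemma comb_tree0 k s : comb_tree k 0 s -> s = nseq (size s) 0.
Proof.
move=> s0; apply: (eq_from_nth (x0 := 0)); rewrite ?size_nseq // => i lt_is.
by rewrite nth_nseq lt_is; apply/eqP; rewrite -leqn0; have := s0 i; rewrite muln0.
Qed.

Lemma prefix_comb_run k i j : j <= k -> prefix (comb_run k i) j = nseq j 0.
Proof.
move=> le_jk; apply: (eq_from_nth (x0 := 0)); rewrite ?size_prefix ?size_nseq // => l lt_lj.
rewrite nth_prefix // nth_nseq lt_lj /comb_run; case: eqP => // eq_lk.
by move: lt_lj; rewrite eq_lk ltnNge le_jk.
Qed.

Section CombEmbeddings.
Variables (M : Type) (T : seq M -> Prop) (A : (nat -> M) -> Prop) (k : nat) (ac : nat -> Prop).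

Lemma comb_embedding_restrict m f : game_embedding (comb_tree k m) (comb_win k m ac) T A f ->
  game_embedding (comb_tree k 0) (comb_win k 0 ac) T A f.
Proof.
have sub s : comb_tree k 0 s -> comb_tree k m s.
  by move=> s0 j; apply: leq_trans (s0 j) _; rewrite muln0.
move=> [f_chrono [f_inj f_runs]]; split; [|split].
- by move=> t /sub; apply: f_chrono.
- by move=> s t /sub Ts /sub Tt; apply: f_inj.
- move=> R RunR S RS; have RunR' : Run (comb_tree k m) R by move=> n; apply: sub.
  by rewrite (f_runs R RunR' S RS) /comb_win; tauto.
Qed.

Lemma run_embedding R0 : Run T R0 -> (ac 0 <-> A R0) ->
  game_embedding (comb_tree k 0) (comb_win k 0 ac) T A (fun s => prefix R0 (size s)).
Proof.
move=> RunR0 ac0; split; [|split].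
- move=> t _; split=> //; split=> [|j]; first by rewrite size_prefix.
  by rewrite take_prefix size_take_min.
- move=> s t /comb_tree0 def_s /comb_tree0 def_t /(congr1 size).
  by rewrite !size_prefix => eq_size; rewrite def_s def_t eq_size.
- move=> R RunR S RS; have <- : R0 = S by apply: (run_ext (N := 0)) => n _; rewrite -RS size_prefix.
  have /Run_comb/(_ k) := RunR; rewrite muln0 leqn0 => /eqP Rk.
  by rewrite /comb_win Rk; tauto.
Qed.
End CombEmbeddings.

Lemma game_iso_comp_embedding M1 M2 (T1 : seq M1 -> Prop) A1 (T : seq M2 -> Prop) A f u :
  is_game T A -> game_embedding T1 A1 T A f -> game_iso T A T A u ->
  game_embedding T1 A1 T A (u \o f).
Proof.
move=> [_ A_run] [f_chrono [f_inj f_runs]] [u_chrono [u_inj [_ [u_win u_win']]]].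
split; [|split].
- move=> t T1t; have [Tft [size_ft take_ft]] := f_chrono t T1t.
  have [Tuft [size_uft take_uft]] := u_chrono _ Tft.
  by split=> //; split=> [|j] /=; [rewrite size_uft | rewrite take_ft take_uft].
- move=> s t T1s T1t eq_uf; apply: f_inj => //.
  by apply: u_inj eq_uf; [case: (f_chrono _ T1s) | case: (f_chrono _ T1t)].
- move=> R RunR S uRS; have [S' [fRS' RunS']] := chronological_run f_chrono RunR.
  have uS'S : runs_to u S' S by move=> n; rewrite -fRS' -uRS.
  rewrite -(f_runs R RunR S' fRS'); split=> [/u_win' [S'' [AS'' uS''S]]|/u_win]; last exact.
  suff <- : S'' = S' by [].
  apply: (run_ext (N := 0)) => n _; apply: u_inj; [exact: A_run | exact: RunS' |].
  by rewrite uS''S uS'S.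
Qed.

Section HomogeneousGames.
Variables (M : Type) (T : seq M -> Prop) (A : (nat -> M) -> Prop).
Hypotheses (gameT : is_game T A) (univ : prop_universal T A) (homog : prop_ultrahomogeneous T A).

Lemma universal_root : T [::].
Proof.
have [f [f_chrono _]] := univ (comb_game 0 0 (fun _ => False)) (comb_finite 0 0).
by have [/(game_tree_nil gameT.1)] := f_chrono [::] (comb_tree_nseq 0 0 0).
Qed.

(* Ultrahomogeneity moves the spine of an embedded comb onto any given run. *)
Lemma comb_embedding_along k m ac R0 : Run T R0 -> (ac 0 <-> A R0) ->
  exists h, game_embedding (comb_tree k m) (comb_win k m ac) T A h /\
    forall s, comb_tree k 0 s -> h s = prefix R0 (size s).
Proof.
move=> RunR0 ac0; have [f f_emb] := univ (comb_game k m ac) (comb_finite k m).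
have [u [u_iso uf]] := homog (comb_game k 0 ac) (comb_finite k 0)
  (comb_embedding_restrict f_emb) (run_embedding k RunR0 ac0).
by exists (u \o f); split; [apply: game_iso_comp_embedding | move=> s /uf].
Qed.

Lemma dense_of_homogeneous t : T t -> exists R, A R /\ prefix R (size t) = t.
Proof.
move=> /(run_through gameT.1) [R0 [RunR0 R0t]].
have [AR0|notAR0] := pselect (A R0); first by exists R0.
have ac0 : 0 = 1 <-> A R0 by [].
have [h [[h_chrono [_ h_runs]] h_spine]] :=
  comb_embedding_along (size t) 1 (ac := fun i => i = 1) RunR0 ac0.
have Run1 := Run_comb_run (size t) (leqnn 1).
have [S [hS _]] := chronological_run h_chrono Run1.
exists S; split; first by apply/(h_runs _ Run1 _ hS); split=> //; rewrite /comb_run eqxx.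
have spine_t : h (nseq (size t) 0) = t by rewrite h_spine ?size_nseq //; apply: comb_tree_nseq.
by rewrite -hS prefix_comb_run.
Qed.

Lemma many_children t : T t -> forall m, exists c : nat -> M,
  (forall i, i <= m -> T (rcons t (c i))) /\ (forall i j, i <= m -> j <= m -> c i = c j -> i = j).
Proof.
move=> /[dup] Tt /(run_through gameT.1) [R0 [RunR0 R0t]] m; have [x0 _] := gameT.1.2 t Tt.
have [h [[h_chrono [h_inj _]] h_spine]] :=
  comb_embedding_along (size t) m (ac := fun _ => A R0) RunR0 (iff_refl _).
have spine : h (nseq (size t) 0) = t by rewrite h_spine ?size_nseq //; apply: comb_tree_nseq.
pose node i := prefix (comb_run (size t) i) (size t).+1.
have node_comb i : i <= m -> comb_tree (size t) m (node i) by move=> le_im; apply: Run_comb_run.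
have node_rcons i : node i = rcons (nseq (size t) 0) i.
  by rewrite /node prefixS prefix_comb_run // /comb_run eqxx.
have h_node i : i <= m -> h (node i) = rcons t (nth x0 (h (node i)) (size t)).
  move=> /node_comb; rewrite node_rcons => comb_i.
  by rewrite {1}(chronological_rcons h_chrono x0 comb_i) spine size_nseq.
exists (fun i => nth x0 (h (node i)) (size t)); split=> [i le_im|i j le_im le_jm eq_ij].
  by rewrite -h_node //; case: (h_chrono _ (node_comb i le_im)).
have eq_node : node i = node j.
  by apply: h_inj; [exact: node_comb | exact: node_comb | rewrite h_node // [RHS]h_node // eq_ij].
by move/(congr1 (nth 0 ^~ (size t))): eq_node; rewrite !node_rcons !nth_rcons size_nseq ltnn eqxx.
Qed.
End HomogeneousGames.

Lemma count_iotaS (p : pred nat) c : count p (iota 0 c.+1) = count p (iota 0 c) + p c.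
Proof. by rewrite -addn1 iotaD count_cat /= addn0. Qed.

Lemma count_iota_mono (p : pred nat) a b : a <= b -> count p (iota 0 a) <= count p (iota 0 b).
Proof. by move/subnKC <-; rewrite iotaD count_cat leq_addr. Qed.

Lemma count_iota_lt (p : pred nat) a b : p a -> a < b -> count p (iota 0 a) < count p (iota 0 b).
Proof.
by move=> pa lt_ab; apply: leq_trans (count_iota_mono p lt_ab); rewrite count_iotaS pa addn1.
Qed.

Lemma count_iota_onto (p : pred nat) : (forall B, exists2 n, B <= n & p n) ->
  forall m, exists2 c, p c & count p (iota 0 c) = m.
Proof.
move=> p_unbounded m.
have count_unbounded k : exists c, k < count p (iota 0 c).
  elim: k => [|k [c lt_kc]].
    have [n _ pn] := p_unbounded 0.
    by exists n.+1; apply: leq_ltn_trans (count_iota_lt pn (ltnSn n)).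
  have [n le_cn pn] := p_unbounded c; exists n.+1; apply: leq_trans (count_iota_lt pn (ltnSn n)).
  by apply: leq_trans lt_kc (count_iota_mono p le_cn).
have ex_above : exists c, m < count p (iota 0 c.+1).
  by have [c lt_mc] := count_unbounded m; exists c; apply: leq_trans lt_mc (count_iota_mono p _).
case: (ex_minnP ex_above) => c lt_mc min_c.
have le_cm : count p (iota 0 c) <= m.
  case: c lt_mc min_c => // c _ min_c; rewrite leqNgt; apply/negP => /min_c.
  by rewrite ltnn.
move: lt_mc; rewrite count_iotaS; case: (boolP (p c)) => [pc|_]; last by rewrite addn0 ltnNge le_cm.
by rewrite addn1 ltnS => le_mc; exists c => //; apply/eqP; rewrite eqn_leq le_cm.
Qed.

Section FLCharacterization.
Variables (M : Type) (T : seq M -> Prop) (A : (nat -> M) -> Prop).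
Variables (codeT : seq M -> nat) (codeA : (nat -> M) -> nat) (x0 : M).
Hypothesis gameT : is_game T A.
Hypothesis T0 : T [::].
Hypothesis codeT_inj : forall s t, T s -> T t -> codeT s = codeT t -> s = t.
Hypothesis codeA_inj : forall R R', A R -> A R' -> codeA R = codeA R' -> R = R'.
Hypothesis dense : forall t, T t -> exists R, A R /\ prefix R (size t) = t.
Hypothesis infinitely_branching : forall t, T t -> forall m, exists c : nat -> M,
  (forall i, i <= m -> T (rcons t (c i))) /\ (forall i j, i <= m -> j <= m -> c i = c j -> i = j).

Let W i R := A R /\ codeA R = i.

Let W_fun i R R' : W i R -> W i R' -> R = R'.
Proof. by move=> [AR <-] [AR' eqR']; apply: codeA_inj. Qed.

Let through_node t : T t -> exists i, through W t i.
Proof. by move=> /dense [R [AR Rt]]; exists (codeA R), R. Qed.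

Definition won_move t : M := least_run W (fun _ => x0) t (size t).

Lemma won_move_child t : T t -> T (rcons t (won_move t)).
Proof.
move=> /through_node /(least_runP (fun _ => x0)) [[AR _] Rt].
by have := gameT.2 _ AR (size t).+1; rewrite prefixS Rt.
Qed.

Definition other_child_code t n :=
  exists2 y, T (rcons t y) & y <> won_move t /\ codeT (rcons t y) = n.

Lemma other_child_codes_unbounded t : T t -> forall B, exists2 n, B <= n & other_child_code t n.
Proof.
move=> Tt B; have [c [Tc c_inj]] := infinitely_branching Tt B.+1.
have [//|none_above] := pselect (exists2 n, B <= n & other_child_code t n); exfalso.
pose codes := [seq codeT (rcons t (c i)) | i <- iota 0 B.+2].
have uniq_codes : uniq codes.
  rewrite map_inj_in_uniq ?iota_uniq // => i j; rewrite !mem_iota !add0n /= !ltnS => le_i le_j.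
  by move/(codeT_inj (Tc i le_i) (Tc j le_j))/rcons_inj => [eq_c]; apply: c_inj.
have codes_small : {subset codes <= codeT (rcons t (won_move t)) :: iota 0 B}.
  move=> n /mapP [i]; rewrite mem_iota add0n ltnS => le_i ->.
  rewrite inE mem_iota add0n /=; have [->|neq_won] := pselect (c i = won_move t).
    by rewrite eqxx.
  apply/orP; right; rewrite ltnNge; apply/negP => le_B; apply: none_above.
  by exists (codeT (rcons t (c i))) => //; exists (c i); auto.
by have := uniq_leq_size uniq_codes codes_small; rewrite size_map /= !size_iota ltnn.
Qed.

Definition other_codes_below t n : nat := count (fun k => `[< other_child_code t k >]) (iota 0 n).

Definition fl_label t x : nat :=
  if `[< x = won_move t >] then 0 else (other_codes_below t (codeT (rcons t x))).+1.

Lemma fl_label_inj t x y : T (rcons t x) -> T (rcons t y) -> fl_label t x = fl_label t y -> x = y.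
Proof.
move=> Tx Ty; rewrite /fl_label; case: asboolP => [->|neq_x]; case: asboolP => [->|neq_y] //.
move=> [] eq_rank; apply: contrapT => neq_xy.
have below_lt z z' : T (rcons t z) -> z <> won_move t -> codeT (rcons t z) < codeT (rcons t z') ->
    other_codes_below t (codeT (rcons t z)) < other_codes_below t (codeT (rcons t z')).
  by move=> Tz neq_z; apply: count_iota_lt; apply/asboolP; exists z.
case: (ltngtP (codeT (rcons t x)) (codeT (rcons t y))) => [lt_xy|lt_yx|eq_xy].
- by move: (below_lt _ _ Tx neq_x lt_xy); rewrite eq_rank ltnn.
- by move: (below_lt _ _ Ty neq_y lt_yx); rewrite eq_rank ltnn.
- by apply: neq_xy; case/rcons_inj: (codeT_inj Tx Ty eq_xy).
Qed.

Lemma fl_label_onto t z : T t -> exists x, T (rcons t x) /\ fl_label t x = z.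
Proof.
move=> Tt; case: z => [|m].
  by exists (won_move t); split; [apply: won_move_child | rewrite /fl_label asboolT].
have unbounded B : exists2 n, B <= n & `[< other_child_code t n >].
  by have [n le_Bn oth] := other_child_codes_unbounded Tt B; exists n => //; apply/asboolP.
have [n /asboolP [y Ty [neq_y code_y]] below_n] := count_iota_onto unbounded m.
by exists y; split=> //; rewrite /fl_label asboolF // /other_codes_below code_y below_n.
Qed.

Lemma fl_label_runs R S : Run T R -> runs_to (relabel fl_label) R S -> A R <-> c00 S.
Proof.
move=> RunR RS; split=> [AR|[N S0]].
  have [N won] := least_run_eventually (fun _ => x0) W_fun (conj AR (erefl (codeA R))).
  by exists N => n le_Nn; rewrite (runs_relabel RS) /fl_label /won_move won // size_prefix asboolT.
suff [i []] : exists i, W i R by [].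
apply: (least_run_follower W_fun (N := N)) => [n|n le_Nn]; first exact: through_node.
move: (S0 n le_Nn); rewrite (runs_relabel RS) /fl_label; case: asboolP => // -> _.
by rewrite /won_move size_prefix.
Qed.

Lemma iso_FL : game_iso T A T_FL c00 (relabel fl_label).
Proof.
apply: relabel_game_iso => //; [exact: fl_label_inj | exact: fl_label_onto | exact: fl_label_runs].
Qed.
End FLCharacterization.

Theorem mainTheorem6 :
  (prop_countable T_FL c00 /\ prop_universal T_FL c00 /\ prop_ultrahomogeneous T_FL c00) /\
  (forall (M : Type) (T : seq M -> Prop) (A : (nat -> M) -> Prop),
     is_game T A ->
     prop_countable T A -> prop_universal T A -> prop_ultrahomogeneous T A ->
     exists u : seq M -> seq nat, game_iso T A T_FL c00 u).
Proof.
split.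
  by split; [exact: countable_FL | split; [exact: universal_FL | exact: ultrahomogeneous_FL]].
move=> M T A gameT [[codeT codeT_inj] [codeA codeA_inj]] univ homog.
have T0 := universal_root gameT univ; have [x0 _] := gameT.1.2 _ T0.
exists (relabel (fl_label T A codeT codeA x0)).
apply: (iso_FL x0 gameT T0 codeT_inj codeA_inj).
- exact: dense_of_homogeneous gameT univ homog.
- exact: many_children gameT univ homog.
Qed.
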